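(* Let $T\colon X\to X$ be a piecewise invertible map (with respect to a regular open partition $\mathcal U$) on a compact Hausdorff space $X$. Then the map $T'\colon X'\to X'$ is a local homeomorphism.
   Context: Let $X$ be compact Hausdorff. A set $U$ is regular open if $U=\mathrm{int}(\overline U)$. A regular open partition of $X$ is a finite family of nonempty, pairwise disjoint regular open sets whose closures cover $X$. For regular open partitions $\mathcal V,\mathcal W$, $\mathcal V\vee\mathcal W=\{V\cap W\ne\emptyset: V\in\mathcal V,W\in\mathcal W\}$; $\mathcal V\preceq\mathcal W$ means each element of $\mathcal W$ lies in a (necessarily unique) element of $\mathcal V$. A continuous $T\colon X\to X$ is piecewise invertible w.r.t. a regular open partition $\mathcal U=\{U_i\}_{i\in I}$, $C_i:=\overline{U_i}$, if each restriction $T_i\colon C_i\to T(C_i)$ is a homeomorphism and $T(U_i)=\mathrm{int}(T(C_i))$. For a regular open partition $\mathcal V=\{V_j\}$, put $\mathcal T_i=\{T(U_i\cap V_j):U_i\cap V_j\neq\emptyset\}\cup\{X\setminus T(C_i)\}$ (omitting empty sets), $T(\mathcal V)=\bigvee_i\mathcal T_i$, and $T^{-1}(\mathcal V)=\{T_i^{-1}(O): i\in I,\ O\in\mathcal V\vee T(\mathcal U),\ O\subseteq T(U_i)\}$; these are regular open partitions, and $T^\beta,T^{-\alpha}$ denote iterates of these operations. Set $\mathcal U_{m,n}=\bigvee_{0\le\alpha\le m,0\le\beta\le n}T^{-\alpha}(T^\beta(\mathcal U))$; for $(m',n')\ge(m,n)$ componentwise, $\mathcal U_{m,n}\preceq\mathcal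 U_{m',n'}$. Let $\bar X=\varprojlim\mathcal U_{m,n}$ (inverse limit of finite discrete sets), whose elements are families $\mathbf U=(U_{m,n})$, $U_{m,n}\in\mathcal U_{m,n}$, compatible under inclusion. Let $X'=\{(x,(U_{m,n}))\in X\times\bar X: x\in\overline{U_{m,n}}\ \forall m,n\}$ with the subspace topology, $\bar T\colon\bar X\to\bar X$, $\bar T((U_{m,n}))=(V_{m,n})$ where $V_{m,n}$ is the unique element of $\mathcal U_{m,n}$ containing $T(U_{m+1,n})$, and $T'(x,\mathbf U)=(Tx,\bar T\mathbf U)$. *)

From HB Require Import structures.
From mathcomp Require Import all_boot all_order all_algebra.
From mathcomp Require Import all_classical all_reals all_analysis.
From Stdlib Require Import ClassicalEpsilon.
Set Implicit Arguments. Unset Strict Implicit. Unset Printing Implicit Defensive.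
Local Open Scope classical_set_scope.

Section Defs.
Variable X : topologicalType.

Definition regular_open (U : set X) : Prop := U = interior (closure U).

Definition regular_open_partition (P : set (set X)) : Prop :=
  [/\ finite_set P,
      (forall U, P U -> U !=set0 /\ regular_open U),
      (forall U V, P U -> P V -> U <> V -> U `&` V = set0) &
      (forall x : X, exists U, P U /\ closure U x)].

Definition pjoin (P Q : set (set X)) : set (set X) :=
  [set W | exists V U, [/\ P V, Q U, W = V `&` U & W !=set0]].

Definition prefines (P Q : set (set X)) : Prop :=
  forall W, Q W -> exists V, P V /\ W `<=` V.

Definition piecewise_invertible (T : X -> X) (PU : set (set X)) : Prop :=
  [/\ continuous T,
      regular_open_partition PU &
      forall U, PU U ->
        [/\ {in closure U &, injective T},
            (* T_i : C_i -> T(C_i) is open onto its image (hence a homeomorphism,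
               T being continuous and injective on C_i) *)
            (forall O, open O -> exists O', open O' /\
                 T @` (closure U `&` O) = T @` closure U `&` O') &
            T @` U = interior (T @` closure U)]].

Variables (T : X -> X) (PU : set (set X)).

Definition img_part (U : set X) (V : set (set X)) : set (set X) :=
  [set W | W !=set0 /\
     ((exists W0, V W0 /\ W = T @` (U `&` W0)) \/ W = ~` (T @` closure U))].

(* T(V) = \/_i T_i (n-ary join over the finite index set PU) *)
Definition Tpart (V : set (set X)) : set (set X) :=
  [set W | W !=set0 /\ exists f : set X -> set X,
      (forall U, PU U -> img_part U V (f U)) /\ W = \bigcap_(U in PU) f U].

Definition Tinv (V : set (set X)) : set (set X) :=
  [set W | exists U O, [/\ PU U, pjoin V (Tpart PU) O, O `<=` T @` U &
                          W = closure U `&` T @^-1` O]].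

(* U_{m,n} = \/_{0<=a<=m, 0<=b<=n} T^{-a}(T^b(PU)) *)
Definition Umn (m n : nat) : set (set X) :=
  [set W | W !=set0 /\ exists f : nat -> nat -> set X,
     (forall a b, (a <= m)%N -> (b <= n)%N -> iter a Tinv (iter b Tpart PU) (f a b))
     /\ W = \bigcap_(ab in [set ab : nat * nat | (ab.1 <= m)%N /\ (ab.2 <= n)%N])
                f ab.1 ab.2].

(* the inverse limit Xbar, as compatible families indexed by (m,n) *)
Definition Xbar : set (nat * nat -> set X) :=
  [set F | (forall m n, Umn m n (F (m, n))) /\
           (forall m n m' n', (m <= m')%N -> (n <= n')%N -> F (m', n') `<=` F (m, n))].

Definition Tbar (F : nat * nat -> set X) : nat * nat -> set X :=
  fun mn => epsilon (inhabits set0)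
     (fun V => Umn mn.1 mn.2 V /\ T @` F (mn.1.+1, mn.2) `<=` V).

Definition Xprime : set (X * (nat * nat -> set X)) :=
  [set p | Xbar p.2 /\ forall m n, closure (p.2 (m, n)) p.1].

Definition Tprime (p : X * (nat * nat -> set X)) : X * (nat * nat -> set X) :=
  (T p.1, Tbar p.2).

(* open sets of X' for the subspace topology of X x Xbar, Xbar carrying the
   inverse-limit (= product of discrete) topology: basic opens are
   O x {F | F_i = G_i for i in a finite list s} *)
Definition Xprime_open (W : set (X * (nat * nat -> set X))) : Prop :=
  W `<=` Xprime /\
  forall p, W p -> exists (O : set X) (s : seq (nat * nat)),
     [/\ open O, O p.1 &
         forall q, Xprime q -> O q.1 -> (forall i, i \in s -> q.2 i = p.2 i) -> W q].

End Defs.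

Definition local_homeomorphism {P : Type} (A : set P) (isopen : set P -> Prop)
  (f : P -> P) : Prop :=
  (forall p, A p -> A (f p)) /\
  forall p, A p -> exists W, [/\ isopen W, W p, isopen (f @` W) &
     {in W &, injective f}] /\ (
     (forall O, isopen O -> isopen (W `&` f @^-1` O)) /\
     (* its inverse f(W) -> W is continuous *)
     (forall O, isopen O -> O `<=` W -> isopen (f @` O))).

From HB Require Import structures.
From mathcomp Require Import all_boot all_order all_algebra.
From mathcomp Require Import all_classical all_reals all_analysis.
From Stdlib Require Import ClassicalEpsilon.
Local Open Scope classical_set_scope.

(* Around p = (x, F) in X' take the cylinder W of all points of X' sharing the
   coordinate F(1,1); it lies in an element U of the partition, on whose closure
   C the map T is injective.  A point (x', F') of W is determined by its image
   (T x', G): F'(m,n) is the unique element of U_{m,n} containing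
   C ∩ T^{-1}(G(m,n+1)).  This makes T' injective on W, and the same recipe,
   applied to a point (y, H) close to T' p, produces its preimage; there one
   uses that T restricted to C is open onto T(C) and that T(C) is closed, by
   compactness.  Continuity of T' holds because T'(q)(m,n) only depends on
   q(m+1,n). *)

Lemma regular_open_partition_trivIset (X : topologicalType) (P : set (set X)) :
  regular_open_partition P -> trivIset P id.
Proof.
move=> [_ _ disj _] A B PA PB [z [Az Bz]]; apply: contrapT => AB.
by have /seteqP[/(_ z (conj Az Bz))] := disj A B PA PB AB.
Qed.

Lemma compact_image_closure_closed (X : topologicalType) (T : X -> X) (U : set X) :
  compact [set: X] -> hausdorff_space X -> continuous T -> closed (T @` closure U).
Proof.
move=> cX hX cT; apply: compact_closed hX _.
apply: continuous_compact; first exact: continuous_subspaceT.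
by apply: subclosed_compact cX _ => //; exact: closed_closure.
Qed.

Section PiecewiseInvertible.
Variables (X : topologicalType) (T : X -> X) (PU : set (set X)).
Hypothesis PU_trivI : trivIset PU id.
Hypothesis T_inj : forall U, PU U -> {in closure U &, injective T}.

Lemma inj_closure U a b : PU U -> closure U a -> closure U b -> T a = T b -> a = b.
Proof. by move=> PUU aU bU; apply: (T_inj _ PUU); apply: mem_set. Qed.
Arguments inj_closure [U a b].

Lemma trivIset_Tpart Q : trivIset Q id -> trivIset (Tpart T PU Q) id.
Proof.
move=> Q_trivI A B [_ [f [hf ->]]] [_ [g [hg ->]]] [z [zA zB]].
suff fg U : PU U -> f U = g U.
  by apply/seteqP; split=> y hy U PUU; [rewrite -fg | rewrite fg] => //; apply: hy.
move=> PUU; have zf := zA U PUU; have zg := zB U PUU.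
have [_ [[W0 [QW0 ef]]|ef]] := hf U PUU; have [_ [[W1 [QW1 eg]]|eg]] := hg U PUU.
- move: zf zg; rewrite ef eg => -[a [aU aW0] <-] [b [bU bW1] /esym Tab].
  have ab : a = b by apply: inj_closure PUU _ _ Tab; apply: subset_closure.
  by subst b; congr (T @` (U `&` _)); apply: Q_trivI => //; exists a.
- move: zf zg; rewrite ef eg => -[a [aU _] <-] nTa; exfalso; apply: nTa.
  by exists a => //; apply: subset_closure.
- move: zf zg; rewrite ef eg => nTz [a [aU _] Taz]; exfalso; apply: nTz.
  by exists a => //; apply: subset_closure.
- by rewrite ef eg.
Qed.

Lemma trivIset_pjoin (P Q : set (set X)) :
  trivIset P id -> trivIset Q id -> trivIset (pjoin P Q) id.
Proof.
move=> P_trivI Q_trivI _ _ [V [U [PV QU -> _]]] [V' [U' [PV' QU' -> _]]].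
move=> [z [[zV zU] [zV' zU']]].
have -> : V = V' by apply: P_trivI => //; exists z.
by have -> : U = U' by apply: Q_trivI => //; exists z.
Qed.

Lemma preimage_piece_sub U (O : set X) z :
  PU U -> O `<=` T @` U -> closure U z -> O (T z) -> U z.
Proof.
move=> PUU OTU zU /OTU[a aU Taz].
by have <- // : a = z by apply: inj_closure PUU _ zU Taz; apply: subset_closure.
Qed.

Lemma trivIset_Tinv Q : trivIset Q id -> trivIset (Tinv T PU Q) id.
Proof.
move=> Q_trivI _ _ [U [V [PUU JV VU ->]]] [U' [V' [PUU' JV' VU' ->]]].
move=> [z [[zU zV] [zU' zV']]].
have UU' : U = U'.
  apply: PU_trivI => //; exists z; split.
  - exact: preimage_piece_sub PUU VU zU zV.
  - exact: preimage_piece_sub PUU' VU' zU' zV'.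
subst U'; have -> // : V = V'.
apply: (trivIset_pjoin _ _ Q_trivI (trivIset_Tpart _ PU_trivI)) => //.
by exists (T z).
Qed.

Definition Tpow a b := iter a (Tinv T PU) (iter b (Tpart T PU) PU).

Lemma trivIset_Tpow a b : trivIset (Tpow a b) id.
Proof.
elim: a => [|a IH]; last exact: trivIset_Tinv.
by elim: b => [|b IH] //; exact: trivIset_Tpart.
Qed.

Lemma Umn_sub_Tpow m n W a b : Umn T PU m n W -> (a <= m)%N -> (b <= n)%N ->
  exists E, Tpow a b E /\ W `<=` E.
Proof.
move=> [_ [f [hf ->]]] am bn; exists (f a b); split; first exact: hf.
by move=> y /(_ (a, b) (conj am bn)).
Qed.
Arguments Umn_sub_Tpow [m n W a b].

Lemma Umn_cover m n Y : Y !=set0 ->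
  (forall a b, (a <= m)%N -> (b <= n)%N -> exists E, Tpow a b E /\ Y `<=` E) ->
  exists E, Umn T PU m n E /\ Y `<=` E.
Proof.
move=> [y Yy] cover.
pose inrange (ab : nat * nat) := (ab.1 <= m)%N /\ (ab.2 <= n)%N.
have pick ab : exists E, inrange ab -> Tpow ab.1 ab.2 E /\ Y `<=` E.
  case: ab => a b; have [[am bn]|out] := pselect (inrange (a, b)).
  - by have [E ?] := cover a b am bn; exists E.
  - by exists set0 => /out.
have [f hf] := boolp.choice pick.
exists (\bigcap_(ab in inrange) f (ab.1, ab.2)).
split; last by move=> z Yz [a b] /hf[_]; apply.
split; first by exists y => -[a b] /hf[_]; apply.
by exists (fun a b => f (a, b)); split=> // a b am bn; case: (hf (a, b) (conj am bn)).
Qed.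

Lemma trivIset_Umn m n : trivIset (Umn T PU m n) id.
Proof.
move=> _ _ [_ [f [hf ->]]] [_ [g [hg ->]]] [z [zA zB]].
have fg a b : (a <= m)%N -> (b <= n)%N -> f a b = g a b.
  move=> am bn; apply: (trivIset_Tpow a b); [exact: hf | exact: hg |].
  by exists z; split; [apply: (zA (a, b)) | apply: (zB (a, b))].
apply/seteqP; split=> y hy [a b] [am bn] /=.
- by rewrite -fg //; exact: (hy (a, b)).
- by rewrite fg //; exact: (hy (a, b)).
Qed.

Lemma Umn_refines m n m' n' W : Umn T PU m' n' W -> (m <= m')%N -> (n <= n')%N ->
  exists V, Umn T PU m n V /\ W `<=` V.
Proof.
move=> UW mm' nn'; apply: Umn_cover; first by case: UW.
by move=> a b am bn; apply: Umn_sub_Tpow UW (leq_trans am mm') (leq_trans bn nn').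
Qed.
Arguments Umn_refines [m n m' n' W].

Lemma Umn_image m n W :
  Umn T PU m.+1 n W -> exists V, Umn T PU m n V /\ T @` W `<=` V.
Proof.
move=> UW; apply: Umn_cover; first by have [[w ?] _] := UW; exists (T w), w.
move=> a b am bn.
have [_ [[? [? [_ [V [P [QV _ -> _]]] _ ->]]] WE]] :=
  Umn_sub_Tpow UW (am : (a.+1 <= m.+1)%N) bn.
by exists V; split=> // _ [w /WE[_ []] VTw _ <-].
Qed.
Arguments Umn_image [m n W].

Lemma Tpart_sub_image P U : Tpart T PU PU P -> PU U ->
  (exists y, closure U y /\ P (T y)) -> P `<=` T @` U.
Proof.
move=> [_ [g [hg ->]]] PUU [y [yU Py]] z Pz.
have [_ [[W0 [_ eg]]|eg]] := hg U PUU.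
- by move: (Pz U PUU); rewrite eg => -[a [aU _] <-]; exists a.
- by move: (Py U PUU); rewrite eg => /=; case; exists y.
Qed.

(* The factor T^{-0}(T^{b+1}(U)) of V pulls back along T on C = closure U into an
   element of T^b(U); the factor T^{-a}(T^b(U)), intersected with the
   T(U)-factor of V, pulls back into an element of T^{-(a+1)}(T^b(U)). *)
Lemma Umn_pullback U m n V : PU U -> Umn T PU m n.+1 V ->
  (exists y, closure U y /\ V (T y)) ->
  exists E, Umn T PU m n E /\ closure U `&` T @^-1` V `<=` E.
Proof.
move=> PUU UV [y [yU Vy]]; apply: Umn_cover; first by exists y.
have [P [TP VP]] := Umn_sub_Tpow UV (leq0n m) (isT : (1 <= n.+1)%N).
have PTU : P `<=` T @` U.
  by apply: Tpart_sub_image TP PUU _; exists y; split; last exact: VP.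
move=> [|a] b am bn.
- have [_ [[_ [g [hg ->]]] VE]] := Umn_sub_Tpow UV (leq0n m) (bn : (b.+1 <= n.+1)%N).
  have [_ [[W0 [TW0 eg]]|eg]] := hg U PUU.
  + exists W0; split=> // z [zU /VE/(_ U PUU)]; rewrite eg => -[c [cU cW0] Tcz].
    by have <- // : c = z by apply: inj_closure PUU _ zU Tcz; apply: subset_closure.
  + by move: (VE _ Vy U PUU); rewrite eg; case; exists y.
- have [E [TE VE]] := Umn_sub_Tpow UV (ltnW am) (leqW bn).
  exists (closure U `&` T @^-1` (E `&` P)); split.
  + exists U, (E `&` P); split=> //; last by move=> z [_ /PTU].
    by exists E, P; split=> //; exists (T y); split; [exact: VE | exact: VP].
  + by move=> z [zU Vz]; split=> //; split; [exact: VE | exact: VP].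
Qed.
Arguments Umn_pullback [U m n V].

Lemma Tbar_spec F m n : Umn T PU m.+1 n (F (m.+1, n)) ->
  Umn T PU m n (Tbar T PU F (m, n)) /\ T @` F (m.+1, n) `<=` Tbar T PU F (m, n).
Proof. by move=> UF; apply: (epsilon_spec (inhabits set0) _ (Umn_image UF)). Qed.
Arguments Tbar_spec [F m n].

Lemma Tbar_sub_image U F : PU U -> Xbar T PU F -> F (1, 1) `<=` U ->
  Tbar T PU F (0, 1) `<=` T @` U.
Proof.
move=> PUU [UF _] FU; have [UG FG] := Tbar_spec (UF 1 1).
have [P [TP GP]] := Umn_sub_Tpow UG (leq0n 0) (leqnn 1).
have [w Fw] := (UF 1 1).1.
suff PTU : P `<=` T @` U by move=> z /GP /PTU.
apply: Tpart_sub_image TP PUU _; exists w; split; first exact: subset_closure (FU _ Fw).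
by apply/GP/FG; exists w.
Qed.

Lemma Tbar_eq F m n V : Umn T PU m.+1 n (F (m.+1, n)) -> Umn T PU m n V ->
  T @` F (m.+1, n) `&` V !=set0 -> Tbar T PU F (m, n) = V.
Proof.
move=> UF UV [z [Fz Vz]]; have [UG FG] := Tbar_spec UF.
by apply: (trivIset_Umn m n) => //; exists z; split => //; exact: FG.
Qed.
Arguments Tbar_eq [F m n V].

Lemma Tbar_Xbar F : Xbar T PU F -> Xbar T PU (Tbar T PU F).
Proof.
move=> [UF Fmono]; split=> [m n|m n m' n' mm' nn'].
  exact: (Tbar_spec (UF m.+1 n)).1.
have [UG' FG'] := Tbar_spec (UF m'.+1 n'); have [_ FG] := Tbar_spec (UF m.+1 n).
have [E [UE G'E]] := Umn_refines UG' mm' nn'.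
suff -> : Tbar T PU F (m, n) = E by [].
apply: Tbar_eq (UF m.+1 n) UE _.
have [w Fw] := (UF m'.+1 n').1; exists (T w); split.
- by exists w => //; exact: Fmono m.+1 n m'.+1 n' mm' nn' w Fw.
- by apply: G'E; apply: FG'; exists w.
Qed.

Hypothesis T_cont : continuous T.

Lemma closure_image A x : closure A x -> closure (T @` A) (T x).
Proof. by move=> Ax B /(T_cont x)/Ax[a [Aa Ba]]; exists (T a); split => //; exists a. Qed.

Lemma Tprime_Xprime p : Xprime T PU p -> Xprime T PU (Tprime T PU p).
Proof.
case: p => x F [XF xF]; split; first exact: Tbar_Xbar.
move=> m n /=; apply: closureS (Tbar_spec (XF.1 m.+1 n)).2 _ _.
exact: closure_image (xF m.+1 n).
Qed.

Definition cylinder (G0 : set X) := [set q | Xprime T PU q /\ q.2 (1, 1) = G0].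

Lemma cylinder_open G0 : Xprime_open T PU (cylinder G0).
Proof.
split=> [q []|p [Xp pG0]] //; exists setT, [:: (1, 1)]; split=> // [|q Xq _ qp].
  exact: openT.
by split=> //; rewrite qp ?mem_head.
Qed.

Lemma cylinder_closure U G0 q : G0 `<=` U -> cylinder G0 q -> closure U q.1.
Proof. by case: q => x F G0U [[_ xF] /= F11]; apply: (closureS G0U); rewrite -F11. Qed.
Arguments cylinder_closure [U G0 q].

Definition pullback U m n (V : set X) := epsilon (inhabits set0)
  (fun E => Umn T PU m n E /\ closure U `&` T @^-1` V `<=` E).

Definition lift U (H : nat * nat -> set X) : nat * nat -> set X :=
  fun mn => pullback U mn.1 mn.2 (H (mn.1, mn.2.+1)).

Lemma pullbackP U m n V : PU U -> Umn T PU m n.+1 V ->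
  (exists y, closure U y /\ V (T y)) ->
  Umn T PU m n (pullback U m n V) /\ closure U `&` T @^-1` V `<=` pullback U m n V.
Proof.
move=> PUU UV meet.
exact: (epsilon_spec (inhabits set0) _ (Umn_pullback PUU UV meet)).
Qed.
Arguments pullbackP [U m n V].

Lemma cylinder_lift U G0 q : PU U -> G0 `<=` U -> cylinder G0 q ->
  q.2 = lift U (Tbar T PU q.2).
Proof.
case: q => x F PUU G0U [[[UF Fmono] _] /= F11]; apply: funext => -[m n] /=.
have [w Fw] := (UF m.+1 n.+1).1.
have wU : closure U w.
  by apply/subset_closure/G0U; rewrite -F11; exact: Fmono 1 1 m.+1 n.+1 _ _ w Fw.
have [UG FG] := Tbar_spec (UF m.+1 n.+1).
have [UE YE] := pullbackP PUU UG (ex_intro _ w (conj wU (FG _ (imageP T Fw)))).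
apply: (trivIset_Umn m n) => //; exists w; split.
- exact: Fmono m n m.+1 n.+1 (leqnSn m) (leqnSn n) w Fw.
- by apply: YE; split => //; apply: FG; exists w.
Qed.
Arguments cylinder_lift [U G0 q].

Lemma Tprime_inj_cylinder U G0 : PU U -> G0 `<=` U ->
  {in cylinder G0 &, injective (Tprime T PU)}.
Proof.
move=> PUU G0U [x1 F1] [x2 F2] /set_mem W1 /set_mem W2 [Tx TF].
congr (_, _).
  exact: inj_closure PUU (cylinder_closure G0U W1) (cylinder_closure G0U W2) Tx.
have /= -> := cylinder_lift PUU G0U W1; have /= -> := cylinder_lift PUU G0U W2.
by rewrite TF.
Qed.

Lemma cylinder_preimage_open G0 O : Xprime_open T PU O ->
  Xprime_open T PU (cylinder G0 `&` Tprime T PU @^-1` O).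
Proof.
move=> [OX Oopen]; split=> [q [[]] //|[x F] [Wp Op]].
have [N [s [oN Nx Ns]]] := Oopen _ Op.
pose shift (i : nat * nat) := (i.1.+1, i.2).
exists (T @^-1` N), ((1, 1) :: map shift s); split=> //.
  by apply: open_comp => // z _; exact: T_cont.
move=> [y G] Xq Ny agree; split.
  by split=> //; move: (agree (1, 1) (mem_head _ _)) => /= ->; exact: Wp.2.
apply: Ns (Tprime_Xprime _ Xq) Ny _ => -[m n] smn.
have GF : G (m.+1, n) = F (m.+1, n).
  by apply: (agree (shift (m, n))); rewrite in_cons (map_f shift smn) orbT.
by rewrite /Tprime /Tbar /= GF.
Qed.

Hypothesis T_open : forall U, PU U -> forall O, open O ->
  exists O', open O' /\ T @` (closure U `&` O) = T @` closure U `&` O'.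
Hypothesis T_closed : forall U, PU U -> closed (T @` closure U).

Lemma closure_pullback U V x : PU U -> closure U x -> V `<=` T @` closure U ->
  closure V (T x) -> closure (closure U `&` T @^-1` V) x.
Proof.
move=> PUU xU VTU TxV B; rewrite nbhsE => -[N [oN Nx] NB].
have [N' [oN' eN']] := T_open _ PUU _ oN.
have [_ N'Tx] : (T @` closure U `&` N') (T x) by rewrite -eN'; exists x.
have [z [Vz N'z]] := TxV N' (open_nbhs_nbhs (conj oN' N'Tx)).
have : (T @` closure U `&` N') z := conj (VTU _ Vz) N'z.
rewrite -eN' => -[a [aU Na] Taz].
by exists a; split; [split => //; rewrite /= Taz | exact: NB].
Qed.

Lemma Xbar_sub_image U H m n : Xbar T PU H -> H (0, 1) `<=` T @` U ->
  H (m, n.+1) `<=` T @` U.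
Proof. by move=> [_ Hmono] HU z /(Hmono 0 1 m n.+1 (leq0n m) (ltn0Sn n)) /HU. Qed.
Arguments Xbar_sub_image [U H m n].

Section Lift.
Variables (U : set X) (H : nat * nat -> set X).
Hypotheses (PUU : PU U) (XH : Xbar T PU H) (HU : H (0, 1) `<=` T @` U).

Lemma lift_meets m n :
  exists2 a, (closure U `&` T @^-1` H (m, n.+1)) a & H (m, n.+1) (T a).
Proof.
have [z Hz] := (XH.1 m n.+1).1; have [a aU Taz] := Xbar_sub_image XH HU _ Hz.
by exists a; [split; [exact: subset_closure | rewrite /= Taz] | rewrite Taz].
Qed.

Lemma lift_spec m n : Umn T PU m n (lift U H (m, n)) /\
  closure U `&` T @^-1` H (m, n.+1) `<=` lift U H (m, n).
Proof.
apply: pullbackP PUU (XH.1 m n.+1) _.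
by have [a [aU _] Ha] := lift_meets m n; exists a.
Qed.

Lemma Tbar_lift : Tbar T PU (lift U H) = H.
Proof.
apply: funext => -[m n]; apply: Tbar_eq (lift_spec m.+1 n).1 (XH.1 m n) _.
have [a Ya Ha] := lift_meets m.+1 n; exists (T a); split.
- by exists a => //; apply: (lift_spec m.+1 n).2.
- exact: XH.2 m n m.+1 n.+1 (leqnSn m) (leqnSn n) _ Ha.
Qed.

Lemma lift_Xprime x : closure U x -> (forall m n, closure (H (m, n)) (T x)) ->
  Xprime T PU (x, lift U H).
Proof.
move=> xU TxH; split; first split=> [m n|m n m' n' mm' nn' /=].
- exact: (lift_spec m n).1.
- have [E [UE liftE]] := Umn_refines (lift_spec m' n').1 mm' nn'.
  suff -> : lift U H (m, n) = E by [].
  have [a [aU Ha] _] := lift_meets m' n'.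
  apply: (trivIset_Umn m n); [exact: (lift_spec m n).1 | exact: UE |].
  exists a; split; last by apply/liftE/(lift_spec m' n').2.
  apply: (lift_spec m n).2; split => //.
  exact: XH.2 m n.+1 m' n'.+1 mm' nn' _ Ha.
- move=> m n /=; apply: closureS (lift_spec m n).2 _ _.
  apply: closure_pullback PUU xU _ (TxH m n.+1).
  by move=> z /(Xbar_sub_image XH HU) [a aU <-]; exists a => //; exact: subset_closure.
Qed.

End Lift.
Arguments Tbar_lift [U H].
Arguments lift_Xprime [U H] _ _ _ [x].

Lemma cylinder_image_open U G0 O : PU U -> G0 `<=` U -> Xprime_open T PU O ->
  O `<=` cylinder G0 -> Xprime_open T PU (Tprime T PU @` O).
Proof.
move=> PUU G0U [OX Oopen] OW; split=> [_ [p Op <-]|_ [[x F] Op <-]].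
  exact: Tprime_Xprime (OX _ Op).
have [N [s [oN Nx Ns]]] := Oopen _ Op.
have [N' [oN' eN']] := T_open _ PUU _ oN.
have Wp := OW _ Op; have [[XF _] F11] := Wp.
have GU : Tbar T PU F (0, 1) `<=` T @` U.
  by apply: Tbar_sub_image PUU XF _; rewrite F11.
pose shift (i : nat * nat) := (i.1, i.2.+1).
exists N', ((0, 1) :: map shift s); split=> //.
  have [] // : (T @` closure U `&` N') (T x).
  by rewrite -eN'; exists x => //; split => //; exact: cylinder_closure G0U Wp.
move=> [y H] [XH yH] N'y agree.
have HU : H (0, 1) `<=` T @` U.
  by move: (agree (0, 1) (mem_head _ _)) => /= ->; exact: GU.
have [x' [x'U Nx'] Tx'] : (T @` (closure U `&` N)) y.
  rewrite eN'; split => //; apply: (T_closed _ PUU); apply: closureS _ (yH 0 1).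
  by move=> z /HU [a aU <-]; exists a => //; exact: subset_closure.
exists (x', lift U H); last by rewrite /Tprime /= Tx' (Tbar_lift PUU XH HU).
apply: Ns (lift_Xprime PUU XH HU x'U _) Nx' _ => [m n|[m n] smn /=].
  by rewrite Tx'; exact: yH.
have /= -> := cylinder_lift PUU G0U Wp; congr (pullback U m n _).
by apply: (agree (shift (m, n))); rewrite in_cons (map_f shift smn) orbT.
Qed.

Lemma Tprime_local_homeomorphism :
  local_homeomorphism (Xprime T PU) (Xprime_open T PU) (Tprime T PU).
Proof.
split=> [p|[x F] Xp]; first exact: Tprime_Xprime.
have [U [PUU FU]] := Umn_sub_Tpow (Xp.1.1 1 1) (leq0n 1) (leq0n 1).
exists (cylinder (F (1, 1))); split; first split.
- exact: cylinder_open.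
- by [].
- exact: cylinder_image_open PUU FU (cylinder_open _) _.
- exact: Tprime_inj_cylinder PUU FU.
split=> O Oopen; first exact: cylinder_preimage_open.
exact: cylinder_image_open PUU FU Oopen.
Qed.

End PiecewiseInvertible.

Theorem proposition5p5 (X : topologicalType) (T : X -> X) (PU : set (set X)) :
  compact [set: X] -> hausdorff_space X ->
  piecewise_invertible T PU ->
  local_homeomorphism (Xprime T PU) (Xprime_open T PU) (Tprime T PU).
Proof.
move=> cX hX [T_cont PUpart T_pw].
have PU_trivI := regular_open_partition_trivIset _ _ PUpart.
apply: (Tprime_local_homeomorphism _ _ _ PU_trivI _ T_cont).
- by move=> U /T_pw[].
- by move=> U /T_pw[].
- by move=> U _; exact: compact_image_closure_closed.
Qed.
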